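(* Let $q\ge1$, $d=2^q$. Each of the following subspaces $W$ of $\mathcal{M}_d^{\otimes 2}$ satisfies $\varphi^{\otimes 2}(C)W\subseteq W$ for all $C\in\mathcal{C}_q$ (some of them may be $0$ for $q=1$): $V_{\mathrm{id}}=\mathrm{span}\{\sigma_0\otimes\sigma_0\}$, $V_{\mathrm r}=\mathrm{span}\{\sigma_0\otimes\tau:\tau\in\boldsymbol{\sigma}_q\}$, $V_{\mathrm l}=\mathrm{span}\{\tau\otimes\sigma_0:\tau\in\boldsymbol{\sigma}_q\}$, $V_{\mathrm d}=\mathrm{span}\{\tau\otimes\tau:\tau\in\boldsymbol{\sigma}_q\}$, $V_{[\mathrm S]}=\mathrm{span}\{S_{\sigma,\tau}:\tau\in\boldsymbol{\sigma}_q,\sigma\in\boldsymbol{C}_\tau\}$, $V_{\{\mathrm S\}}=\mathrm{span}\{S_{\sigma,\tau}:\tau\in\boldsymbol{\sigma}_q,\sigma\in\boldsymbol{N}_\tau\}$, $V_{[\mathrm A]}=\mathrm{span}\{A_{\sigma,\tau}:\tau\in\boldsymbol{\sigma}_q,\sigma\in\boldsymbol{C}_\tau\}$, $V_{\{\mathrm A\}}=\mathrm{span}\{A_{\sigma,\tau}:\tau\in\boldsymbol{\sigma}_q,\sigma\in\boldsymbol{N}_\tau\}$.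
   Context: $\mathcal{M}_d$ is the space of complex $d\times d$ matrices. $X,Y,Z$ are the single-qubit Pauli matrices; $\hat{\mathcal{P}}_q$ is the set of $q$-fold tensor products of elements of $\{\mathbb{1},X,Y,Z\}$. Set $\sigma_0=\mathbb{1}/\sqrt d$, $\boldsymbol{\sigma}_q=\{P/\sqrt d:P\in\hat{\mathcal P}_q\setminus\{\mathbb 1\}\}$. For $\tau\in\boldsymbol{\sigma}_q$: $\boldsymbol{N}_\tau=\{\sigma\in\boldsymbol{\sigma}_q:\sigma\tau+\tau\sigma=0\}$, $\boldsymbol{C}_\tau=\{\sigma\in\boldsymbol{\sigma}_q\setminus\{\tau\}:\sigma\tau=\tau\sigma\}$. For $\sigma\ne\tau$ in $\boldsymbol{\sigma}_q$, $S_{\sigma,\tau}=\frac{1}{\sqrt2}(\sigma\otimes\tau+\tau\otimes\sigma)$ and $A_{\sigma,\tau}=\frac{1}{\sqrt2}(\sigma\otimes\tau-\tau\otimes\sigma)$. The Pauli group $\mathcal{P}_q\subset U(2^q)$ consists of all $q$-fold tensor products of elements of the group generated by $X,Z,i\mathbb 1_2$; the Clifford group is $\mathcal{C}_q=\{U\in U(2^q):U\mathcal{P}_qU^\dagger\subseteq\mathcal{P}_q\}/U(1)$. The two-copy representation of $\mathcal C_q$ on $\mathcal{M}_d^{\otimes2}$ is given by $\varphi^{\otimes2}(C)(A\otimes B)=(CAC^\dagger)\otimes(CBC^\dagger)$, extended linearly (independent of the phase of $C$). *)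

From HB Require Import structures.
From mathcomp Require Import all_boot all_order all_algebra all_field.
From mathcomp Require Export mxtens.
Set Implicit Arguments. Unset Strict Implicit. Unset Printing Implicit Defensive.
Import Order.TTheory GRing.Theory Num.Theory.
Local Open Scope ring_scope.

Definition adjm {m n} (A : 'M[algC]_(m, n)) : 'M[algC]_(n, m) := (map_mx Num.conj A)^T.

Definition unitary {n} (U : 'M[algC]_n) : Prop := U *m adjm U = 1%:M.

Definition pX : 'M[algC]_2 := \matrix_(i < 2, j < 2) (if i == j then 0 else 1).
Definition pY : 'M[algC]_2 :=
  \matrix_(i < 2, j < 2) (if i == j then 0 else if i == 0 then - 'i else 'i).
Definition pZ : 'M[algC]_2 :=
  \matrix_(i < 2, j < 2) (if i == j then (if i == 0 then 1 else -1) else 0).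

Definition pauli1 (a : 'I_4) : 'M[algC]_2 :=
  match val a with 0 => 1%:M | 1 => pX | 2 => pY | _ => pZ end.

Fixpoint tens (q : nat) (f : nat -> 'M[algC]_2) : 'M[algC]_(2 ^ q) :=
  match q return 'M[algC]_(2 ^ q) with
  | 0 => 1%:M
  | q'.+1 => castmx (esym (expnS 2 q'), esym (expnS 2 q'))
               (f 0%N *t tens q' (fun n => f n.+1))
  end.

(* Pauli string (element of \hat P_q) indexed by p : 'I_q -> {1,X,Y,Z} *)
Definition pstr (q : nat) (p : {ffun 'I_q -> 'I_4}) : 'M[algC]_(2 ^ q) :=
  tens q (fun n => pauli1 (odflt ord0 (omap p (insub n)))).

Definition pid (q : nat) : {ffun 'I_q -> 'I_4} := [ffun _ => ord0].

Inductive in_gen1 : 'M[algC]_2 -> Prop :=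
  | gen1X : in_gen1 pX
  | gen1Z : in_gen1 pZ
  | gen1i : in_gen1 ('i%:M)
  | gen1M A B : in_gen1 A -> in_gen1 B -> in_gen1 (A *m B).

Definition pauli_group (q : nat) (M : 'M[algC]_(2 ^ q)) : Prop :=
  exists f : nat -> 'M[algC]_2,
    (forall j, (j < q)%N -> in_gen1 (f j)) /\ M = tens q f.

(* representatives of the Clifford group C_q (the U(1) phase is irrelevant) *)
Definition clifford (q : nat) (C : 'M[algC]_(2 ^ q)) : Prop :=
  unitary C /\
  forall P, pauli_group P -> pauli_group (C *m P *m adjm C).

(* M_d (x) M_d is identified with 'M_(d*d) via the Kronecker product;
   phi2 C is the linear map with phi2 C (A *t B) = (C A C^+) *t (C B C^+) *)
Definition phi2 (q : nat) (C : 'M[algC]_(2 ^ q)) (X : 'M[algC]_(2 ^ q * 2 ^ q))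
  : 'M[algC]_(2 ^ q * 2 ^ q) := (C *t C) *m X *m adjm (C *t C).

Definition dim (q : nat) : algC := (2 ^ q)%:R.

Definition sigma0 (q : nat) : 'M[algC]_(2 ^ q) := (sqrtC (dim q))^-1 *: 1%:M.
Definition sigma (q : nat) (p : {ffun 'I_q -> 'I_4}) : 'M[algC]_(2 ^ q) :=
  (sqrtC (dim q))^-1 *: pstr p.

(* the index set of boldsymbol sigma_q : non-identity Pauli strings *)
Definition nonid (q : nat) : seq {ffun 'I_q -> 'I_4} :=
  [seq p <- enum {ffun 'I_q -> 'I_4} | p != pid q].

(* sigma in N_tau  /  sigma in C_tau (as matrices) *)
Definition anticommutes q (s t : 'M[algC]_(2 ^ q)) : bool := s *m t + t *m s == 0.
Definition commutes_ne q (s t : 'M[algC]_(2 ^ q)) : bool := (s != t) && (s *m t == t *m s).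

Definition Smx q (s t : 'M[algC]_(2 ^ q)) : 'M[algC]_(2 ^ q * 2 ^ q) :=
  (sqrtC 2)^-1 *: (s *t t + t *t s).
Definition Amx q (s t : 'M[algC]_(2 ^ q)) : 'M[algC]_(2 ^ q * 2 ^ q) :=
  (sqrtC 2)^-1 *: (s *t t - t *t s).

Definition Vid q : {vspace 'M[algC]_(2 ^ q * 2 ^ q)} :=
  <<[:: sigma0 q *t sigma0 q]>>%VS.
Definition Vr q : {vspace 'M[algC]_(2 ^ q * 2 ^ q)} :=
  <<[seq sigma0 q *t sigma t | t <- nonid q]>>%VS.
Definition Vl q : {vspace 'M[algC]_(2 ^ q * 2 ^ q)} :=
  <<[seq sigma t *t sigma0 q | t <- nonid q]>>%VS.
Definition Vd q : {vspace 'M[algC]_(2 ^ q * 2 ^ q)} :=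
  <<[seq sigma t *t sigma t | t <- nonid q]>>%VS.
Definition VSc q : {vspace 'M[algC]_(2 ^ q * 2 ^ q)} :=
  <<[seq Smx (sigma s) (sigma t) | t <- nonid q,
       s <- [seq s <- nonid q | commutes_ne (sigma s) (sigma t)]]>>%VS.
Definition VSa q : {vspace 'M[algC]_(2 ^ q * 2 ^ q)} :=
  <<[seq Smx (sigma s) (sigma t) | t <- nonid q,
       s <- [seq s <- nonid q | anticommutes (sigma s) (sigma t)]]>>%VS.
Definition VAc q : {vspace 'M[algC]_(2 ^ q * 2 ^ q)} :=
  <<[seq Amx (sigma s) (sigma t) | t <- nonid q,
       s <- [seq s <- nonid q | commutes_ne (sigma s) (sigma t)]]>>%VS.
Definition VAa q : {vspace 'M[algC]_(2 ^ q * 2 ^ q)} :=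
  <<[seq Amx (sigma s) (sigma t) | t <- nonid q,
       s <- [seq s <- nonid q | anticommutes (sigma s) (sigma t)]]>>%VS.

Definition phi_invariant q (C : 'M[algC]_(2 ^ q)) (W : {vspace 'M[algC]_(2 ^ q * 2 ^ q)}) : Prop :=
  forall X, X \in W -> phi2 C X \in W.

From Pilot Require Import Defs.
From HB Require Import structures.
From mathcomp Require Import all_boot all_order all_algebra all_field.
From mathcomp Require Import mxtens.
Set Implicit Arguments. Unset Strict Implicit. Unset Printing Implicit Defensive.
Import Order.TTheory GRing.Theory Num.Theory.
Local Open Scope ring_scope.

(* Conjugation by a unitary C is a trace-preserving algebra automorphism of
   M_d, and for a Clifford C it maps every normalised Pauli string sigma to
   c sigma' with c <> 0, where sigma' <> sigma_0 because the trace is preserved.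
   The two-copy action is conjugation by C (x) C, so it maps sigma (x) tau to a
   multiple of sigma' (x) tau', and each spanning vector of the eight spaces to
   a multiple of a spanning vector of the same kind: anticommutation and
   commutation survive an automorphism and nonzero rescaling, and sigma <> tau
   forces sigma' <> tau' since distinct Pauli strings are orthogonal for the
   trace form, hence never proportional. *)

Section CastTensor.
Variable R : pzRingType.

Lemma castmx_mulmx m n p m' n' p' (em : m = m') (en : n = n') (ep : p = p')
    (A : 'M[R]_(m, n)) (B : 'M[R]_(n, p)) :
  castmx (em, ep) (A *m B) = castmx (em, en) A *m castmx (en, ep) B.
Proof. by case: m' / em; case: n' / en; case: p' / ep. Qed.

Lemma castmxZ m n m' n' (em : m = m') (en : n = n') c (A : 'M[R]_(m, n)) :
  castmx (em, en) (c *: A) = c *: castmx (em, en) A.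
Proof. by case: m' / em; case: n' / en. Qed.

Lemma mxtrace_castmx n n' (e : n = n') (A : 'M[R]_n) : \tr (castmx (e, e) A) = \tr A.
Proof. by case: n' / e. Qed.

Lemma mxtrace_tensmx m n (A : 'M[R]_m) (B : 'M[R]_n) : \tr (A *t B) = \tr A * \tr B.
Proof.
rewrite /mxtrace (reindex (@mxtens_index m n)) /=; last first.
  exact: onW_bij (Bijective (@mxtens_indexK m n) (@mxtens_unindexK m n)).
by rewrite big_distrlr pair_big; apply: eq_bigr => -[i j] _; rewrite tensmxE.
Qed.

Lemma tensmxZl m n p r c (A : 'M[R]_(m, n)) (B : 'M[R]_(p, r)) :
  (c *: A) *t B = c *: (A *t B).
Proof. by apply/matrixP => i j; rewrite !mxE mulrA. Qed.

End CastTensor.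

Lemma tensmxZr (R : comPzRingType) m n p r c (A : 'M[R]_(m, n)) (B : 'M[R]_(p, r)) :
  A *t (c *: B) = c *: (A *t B).
Proof. by apply/matrixP => i j; rewrite !mxE mulrCA. Qed.

Lemma tensmxZ (R : comPzRingType) m n p r a b (A : 'M[R]_(m, n)) (B : 'M[R]_(p, r)) :
  (a *: A) *t (b *: B) = (a * b) *: (A *t B).
Proof. by rewrite tensmxZl tensmxZr scalerA. Qed.

Lemma prod_nat_indicator (R : comPzSemiRingType) q (P : pred 'I_q) (k : nat) :
  \prod_(i < q) (if P i then k%:R else 0) = if [forall i, P i] then (k ^ q)%:R else 0 :> R.
Proof.
case: ifPn => [/forallP allP | /forallPn [i /negbTE Pi]].
  by rewrite (eq_bigr (fun=> k%:R)) ?prodr_const ?card_ord ?natrX // => i _; rewrite allP.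
by rewrite (bigD1 i) //= Pi mul0r.
Qed.

Lemma span_stable (K : fieldType) (vT : vectType K) (f : {linear vT -> vT}) (S : seq vT) :
  {in S, forall v, f v \in <<S>>%VS} -> {in <<S>>%VS, forall v, f v \in <<S>>%VS}.
Proof.
move=> fS v /(coord_span (X := in_tuple S)) ->.
by rewrite linear_sum; apply: memv_suml => i _; rewrite linearZ memvZ // fS // mem_nth.
Qed.

Lemma sqrCi_mul : 'i * 'i = -1 :> algC. Proof. by rewrite -expr2 sqrCi. Qed.

Ltac pauli_simpl :=
  do 2 rewrite ?mulr0 ?mul0r ?mulr1 ?mul1r ?add0r ?addr0 ?mulrN ?mulNr ?sqrCi_mul ?opprK ?oppr0.

Ltac mx2_compute :=
  apply/matrixP => -[[|[|//]] ?] [[|[|//]] ?];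
  rewrite !mxE !big_ord_recl !big_ord0 !mxE ?big_ord_recl ?big_ord0 ?mxE /=; pauli_simpl.

Ltac pauli_check := split; [by rewrite ?oppr_eq0 ?oner_eq0 ?neq0Ci | mx2_compute; done].

Ltac pauli_witness a :=
  first [ exists 1, (@Ordinal 4 a isT); pauli_check
        | exists 'i, (@Ordinal 4 a isT); pauli_check
        | exists (- 'i), (@Ordinal 4 a isT); pauli_check ].

Lemma pauli1_mul a b : exists (c : algC) a', c != 0 /\ pauli1 a *m pauli1 b = c *: pauli1 a'.
Proof.
case: a => -[|[|[|[|//]]]] ?; case: b => -[|[|[|[|//]]]] ?;
rewrite /pauli1 /pX /pY /pZ /=;
first [pauli_witness 0%N | pauli_witness 1%N | pauli_witness 2%N | pauli_witness 3%N].
Qed.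

Lemma mxtrace_pauli1_mul a b : \tr (pauli1 a *m pauli1 b) = if a == b then 2 else 0.
Proof.
case: a => -[|[|[|[|//]]]] ?; case: b => -[|[|[|[|//]]]] ?;
rewrite /pauli1 /pX /pY /pZ /= /mxtrace !big_ord_recl !big_ord0 !mxE;
rewrite !big_ord_recl !big_ord0 !mxE /=; pauli_simpl; by rewrite ?addrN ?addNr.
Qed.

Lemma mxtrace_pauli1 a : \tr (pauli1 a) = if a == ord0 then 2 else 0.
Proof. by rewrite eq_sym -(mxtrace_pauli1_mul ord0) [pauli1 ord0]/(1%:M) mul1mx. Qed.

Lemma in_gen1_pauli1 a : in_gen1 (pauli1 a).
Proof.
have pXX : pX *m pX = 1%:M by rewrite /pX; mx2_compute.
have pY_iXZ : 'i%:M *m (pX *m pZ) = pY by rewrite /pX /pY /pZ; mx2_compute.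
case: a => -[|[|[|[|//]]]] ?; rewrite /pauli1 /= -?pXX -?pY_iXZ; by repeat constructor.
Qed.

Lemma in_gen1_scaled_pauli1 M : in_gen1 M -> exists (c : algC) a, c != 0 /\ M = c *: pauli1 a.
Proof.
elim=> [|||A B _ [c1 [a1 [c1_neq0 ->]]] _ [c2 [a2 [c2_neq0 ->]]]].
- by exists 1, (@Ordinal 4 1 isT); rewrite scale1r oner_eq0.
- by exists 1, (@Ordinal 4 3 isT); rewrite scale1r oner_eq0.
- by exists 'i, ord0; rewrite neq0Ci scalemx1.
have [c [a [c_neq0 e]]] := pauli1_mul a1 a2.
exists (c1 * c2 * c), a; rewrite !mulf_neq0 //; split=> //.
by rewrite -scalemxAl -scalemxAr e !scalerA.
Qed.

Lemma eq_tens q f g : (forall n, (n < q)%N -> f n = g n) -> tens q f = tens q g.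
Proof.
elim: q f g => [|q IHq] f g fg //=.
by rewrite fg // (IHq _ (fun n => g n.+1)) // => n ltnq; apply: fg.
Qed.

Lemma tens_mul q f g : tens q f *m tens q g = tens q (fun n => f n *m g n).
Proof.
elim: q f g => [|q IHq] f g /=; first by rewrite mul1mx.
by rewrite -castmx_mulmx tensmx_mul IHq.
Qed.

Lemma tensZ q c f : tens q (fun n => c n *: f n) = (\prod_(i < q) c i) *: tens q f.
Proof.
elim: q c f => [|q IHq] c f /=; first by rewrite big_ord0 scale1r.
by rewrite IHq -castmxZ tensmxZ big_ord_recl.
Qed.

Lemma mxtrace_tens q f : \tr (tens q f) = \prod_(i < q) \tr (f i).
Proof.
elim: q f => [|q IHq] f /=; first by rewrite big_ord0 mxtrace1.
by rewrite mxtrace_castmx mxtrace_tensmx IHq big_ord_recl.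
Qed.

Section PauliStrings.
Variable q : nat.
Implicit Types p s t : {ffun 'I_q -> 'I_4}.

Lemma pauli_group_pstr p : pauli_group (pstr p).
Proof.
exists (fun n => pauli1 (odflt ord0 (omap p (insub n)))).
by split=> // j _; apply: in_gen1_pauli1.
Qed.

Lemma pauli_group_scaled_pstr M : pauli_group M -> exists (c : algC) p, c != 0 /\ M = c *: pstr p.
Proof.
case=> f [f_gen ->].
have /fin_all_exists [cp cpE] : forall j : 'I_q, exists cp : algC * 'I_4,
    cp.1 != 0 /\ f j = cp.1 *: pauli1 cp.2.
  move=> j; have [c [a [c_neq0 fjE]]] := in_gen1_scaled_pauli1 (f_gen _ (ltn_ord j)).
  by exists (c, a).
pose c n := odflt 1 (omap (fun j => (cp j).1) (insub n)).
exists (\prod_(j < q) c j), [ffun j => (cp j).2]; split.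
  by apply/prodf_neq0 => j _; rewrite /c valK; case: (cpE j).
rewrite /pstr -tensZ; apply: eq_tens => n ltnq.
rewrite -[n]/(val (Ordinal ltnq)) /c !valK /= ffunE.
by case: (cpE (Ordinal ltnq)).
Qed.

Lemma mxtrace_pstr_mul p p' : \tr (pstr p *m pstr p') = if p == p' then (2 ^ q)%:R else 0.
Proof.
rewrite /pstr tens_mul mxtrace_tens.
under eq_bigr => i _ do rewrite valK /= mxtrace_pauli1_mul.
rewrite prod_nat_indicator; congr (if _ then _ else _).
by apply/forallP/eqP => [pp'|-> i //]; apply/ffunP => i; apply/eqP.
Qed.

Lemma mxtrace_pstr p : \tr (pstr p) = if p == pid q then (2 ^ q)%:R else 0.
Proof.
rewrite /pstr mxtrace_tens.
under eq_bigr => i _ do rewrite valK /= mxtrace_pauli1.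
rewrite prod_nat_indicator; congr (if _ then _ else _).
by apply/forallP/eqP => [p1|-> i]; [apply/ffunP => i; rewrite ffunE; apply/eqP | rewrite ffunE].
Qed.

Lemma mem_nonid p : (p \in nonid q) = (p != pid q).
Proof. by rewrite mem_filter mem_enum andbT. Qed.

Lemma dim_neq0 : Defs.dim q != 0.
Proof. by rewrite pnatr_eq0 expn_eq0. Qed.

Lemma sigma_scale_neq0 : (sqrtC (Defs.dim q))^-1 != 0.
Proof. by rewrite invr_eq0 sqrtC_eq0 dim_neq0. Qed.

Lemma scaled_sigma_inj s t a b : b != 0 -> a *: sigma s = b *: sigma t -> s = t.
Proof.
move=> b_neq0 /(congr1 (fun M => \tr (M *m pstr t))).
rewrite /sigma -!scalemxAl !mxtraceZ !mxtrace_pstr_mul eqxx.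
have [//|_] := eqVneq s t; rewrite !mulr0 => /esym/eqP.
by rewrite !mulf_eq0 (negbTE b_neq0) (negbTE sigma_scale_neq0) (negbTE dim_neq0).
Qed.

Lemma mxtrace_sigma_eq0 p : (\tr (sigma p) == 0) = (p != pid q).
Proof.
rewrite mxtraceZ mxtrace_pstr.
case: (eqVneq p (pid q)) => _; last by rewrite mulr0 eqxx.
by apply/negbTE/mulf_neq0; [exact: sigma_scale_neq0 | exact: dim_neq0].
Qed.

End PauliStrings.

Lemma adjm_tens m n p r (A : 'M[algC]_(m, n)) (B : 'M[algC]_(p, r)) :
  adjm (A *t B) = adjm A *t adjm B.
Proof. by rewrite /adjm map_mxT trmx_tens. Qed.

Definition adj_act n (U A : 'M[algC]_n) : 'M[algC]_n := U *m A *m adjm U.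

Fact adj_act_is_linear n (U : 'M[algC]_n) : linear (adj_act U).
Proof. by move=> a A B; rewrite /adj_act mulmxDr mulmxDl -scalemxAr -scalemxAl. Qed.

HB.instance Definition _ n (U : 'M[algC]_n) :=
  GRing.isLinear.Build algC _ _ _ (adj_act U) (adj_act_is_linear U).

Lemma adj_act_tens m n (U A : 'M[algC]_m) (V B : 'M[algC]_n) :
  adj_act (U *t V) (A *t B) = adj_act U A *t adj_act V B.
Proof. by rewrite /adj_act adjm_tens !tensmx_mul. Qed.

Section UnitaryConjugation.
Variables (n : nat) (U : 'M[algC]_n).
Hypothesis U_unitary : unitary U.

Lemma unitary_adjm_mul : adjm U *m U = 1%:M.
Proof. exact: mulmx1C U_unitary. Qed.

Lemma adj_actM A B : adj_act U (A *m B) = adj_act U A *m adj_act U B.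
Proof. by rewrite /adj_act !mulmxA -(mulmxA _ (adjm U) U) unitary_adjm_mul mulmx1. Qed.

Lemma adj_act_inj : injective (adj_act U).
Proof.
move=> A B /(congr1 (fun M => adjm U *m M *m U)).
by rewrite /adj_act !mulmxA unitary_adjm_mul !mul1mx -!mulmxA unitary_adjm_mul !mulmx1.
Qed.

Lemma mxtrace_adj_act A : \tr (adj_act U A) = \tr A.
Proof. by rewrite /adj_act mxtrace_mulC mulmxA unitary_adjm_mul mul1mx. Qed.

Lemma adj_act_scalar a : adj_act U a%:M = a%:M.
Proof. by rewrite /adj_act mul_mx_scalar -scalemxAl U_unitary scalemx1. Qed.

Lemma commutes_adj_act A B :
  (adj_act U A *m adj_act U B == adj_act U B *m adj_act U A) = (A *m B == B *m A).
Proof. by rewrite -!adj_actM (inj_eq adj_act_inj). Qed.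

End UnitaryConjugation.

Lemma anticommutes_adj_act q (U A B : 'M[algC]_(2 ^ q)) : unitary U ->
  anticommutes (adj_act U A) (adj_act U B) = anticommutes A B.
Proof.
move=> U_unitary; rewrite /anticommutes -!(adj_actM U_unitary) -(linearD (adj_act U)).
by rewrite -{1}(linear0 (adj_act U)) (inj_eq (adj_act_inj U_unitary)).
Qed.

Section ScaledCommutation.
Variables (q : nat) (a b : algC) (A B : 'M[algC]_(2 ^ q)).
Hypotheses (a_neq0 : a != 0) (b_neq0 : b != 0).

Lemma anticommutesZ : anticommutes (a *: A) (b *: B) = anticommutes A B.
Proof.
rewrite /anticommutes -!scalemxAl -!scalemxAr !scalerA [b * a]mulrC -scalerDr.
by rewrite scaler_eq0 mulf_eq0 (negbTE a_neq0) (negbTE b_neq0).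
Qed.

Lemma commutesZ : ((a *: A) *m (b *: B) == (b *: B) *m (a *: A)) = (A *m B == B *m A).
Proof.
rewrite -!scalemxAl -!scalemxAr !scalerA [b * a]mulrC.
exact/inj_eq/scalerI/mulf_neq0.
Qed.

End ScaledCommutation.

Lemma phi_invariant_span q (C : 'M[algC]_(2 ^ q)) (S : seq 'M[algC]_(2 ^ q * 2 ^ q)) :
  {in S, forall X, phi2 C X \in <<S>>%VS} -> phi_invariant C <<S>>%VS.
Proof. exact: (span_stable (f := adj_act (C *t C))). Qed.

Lemma phi2E q (C : 'M[algC]_(2 ^ q)) : phi2 C =1 adj_act (C *t C).
Proof. by []. Qed.

Lemma phi2_tens q (C A B : 'M[algC]_(2 ^ q)) : phi2 C (A *t B) = adj_act C A *t adj_act C B.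
Proof. exact: adj_act_tens. Qed.

Lemma SmxZ q a b (A B : 'M[algC]_(2 ^ q)) : Smx (a *: A) (b *: B) = (a * b) *: Smx A B.
Proof. by rewrite /Smx !tensmxZ [b * a]mulrC -scalerDr !scalerA mulrC. Qed.

Lemma AmxZ q a b (A B : 'M[algC]_(2 ^ q)) : Amx (a *: A) (b *: B) = (a * b) *: Amx A B.
Proof. by rewrite /Amx !tensmxZ [b * a]mulrC -scalerBr !scalerA mulrC. Qed.

Lemma phi2_Smx q (C A B : 'M[algC]_(2 ^ q)) : phi2 C (Smx A B) = Smx (adj_act C A) (adj_act C B).
Proof. by rewrite phi2E /Smx linearZ linearD /= !adj_act_tens. Qed.

Lemma phi2_Amx q (C A B : 'M[algC]_(2 ^ q)) : phi2 C (Amx A B) = Amx (adj_act C A) (adj_act C B).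
Proof. by rewrite phi2E /Amx linearZ linearB /= !adj_act_tens. Qed.

Section CliffordAction.
Variables (q : nat) (C : 'M[algC]_(2 ^ q)).
Hypothesis C_clifford : clifford C.

Let C_unitary : unitary C := C_clifford.1.

Lemma adj_act_sigma (s : {ffun 'I_q -> 'I_4}) : s \in nonid q ->
  exists (c : algC) s', [/\ c != 0, s' \in nonid q & adj_act C (sigma s) = c *: sigma s'].
Proof.
move=> s_nonid.
have [c [s' [c_neq0 Ps]]] := pauli_group_scaled_pstr (C_clifford.2 _ (pauli_group_pstr s)).
have sigma_s : adj_act C (sigma s) = c *: sigma s'.
  by rewrite /sigma /adj_act -scalemxAr -scalemxAl Ps !scalerA mulrC.
exists c, s'; split=> //.
have : c * \tr (sigma s') == 0.
  by rewrite -mxtraceZ -sigma_s mxtrace_adj_act // mxtrace_sigma_eq0 -mem_nonid.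
by rewrite mulf_eq0 (negbTE c_neq0) mxtrace_sigma_eq0 mem_nonid.
Qed.

Lemma adj_act_sigma0 : adj_act C (sigma0 q) = sigma0 q.
Proof. by rewrite /sigma0 scalemx1 adj_act_scalar. Qed.

Lemma adj_act_sigma_inj s t s' (a b : algC) : a != 0 ->
  adj_act C (sigma s) = a *: sigma s' -> adj_act C (sigma t) = b *: sigma s' -> s = t.
Proof.
move=> a_neq0 sE tE; apply: (@scaled_sigma_inj _ s t b a a_neq0).
apply: (adj_act_inj C_unitary).
rewrite [adj_act C (b *: _)]linearZ [adj_act C (a *: _)]linearZ /= sE tE.
by rewrite scalerA [in RHS]scalerA mulrC.
Qed.

Definition clifford_stable (P : rel 'M[algC]_(2 ^ q)) :=
  forall s t s' t' (a b : algC), a != 0 -> b != 0 ->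
    adj_act C (sigma s) = a *: sigma s' -> adj_act C (sigma t) = b *: sigma t' ->
    P (sigma s) (sigma t) -> P (sigma s') (sigma t').

Lemma anticommutes_clifford_stable : clifford_stable (@anticommutes q).
Proof.
move=> s t s' t' a b a_neq0 b_neq0 sE tE st_anti.
by rewrite -(anticommutesZ _ _ a_neq0 b_neq0) -sE -tE anticommutes_adj_act.
Qed.

Lemma commutes_ne_clifford_stable : clifford_stable (@commutes_ne q).
Proof.
move=> s t s' t' a b a_neq0 b_neq0 sE tE /andP[st_neq st_comm]; apply/andP; split.
  apply: contraNneq st_neq => s't'.
  have sE' : adj_act C (sigma s) = a *: sigma t' by rewrite sE s't'.
  by rewrite (adj_act_sigma_inj a_neq0 sE' tE).
by rewrite -(commutesZ _ _ a_neq0 b_neq0) -sE -tE commutes_adj_act.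
Qed.

Lemma map_sigma_invariant (F : 'M[algC]_(2 ^ q) -> 'M[algC]_(2 ^ q * 2 ^ q)) :
  (forall (a : algC) A, F (a *: A) \in <[F A]>%VS) ->
  (forall A, phi2 C (F A) = F (adj_act C A)) ->
  phi_invariant C <<[seq F (sigma t) | t <- nonid q]>>%VS.
Proof.
move=> FZ Fphi; apply: phi_invariant_span => _ /mapP[t t_nonid ->].
have [c [t' [_ t'_nonid tE]]] := adj_act_sigma t_nonid.
rewrite Fphi tE; apply: subvP (FZ c _); rewrite -memvE.
exact/memv_span/map_f.
Qed.

Lemma pair_sigma_invariant (G : 'M[algC]_(2 ^ q) -> 'M[algC]_(2 ^ q) -> 'M[algC]_(2 ^ q * 2 ^ q))
    (P : rel 'M[algC]_(2 ^ q)) :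
  (forall (a b : algC) A B, G (a *: A) (b *: B) = (a * b) *: G A B) ->
  (forall A B, phi2 C (G A B) = G (adj_act C A) (adj_act C B)) ->
  clifford_stable P ->
  phi_invariant C <<[seq G (sigma s) (sigma t) | t <- nonid q,
                      s <- [seq s <- nonid q | P (sigma s) (sigma t)]]>>%VS.
Proof.
move=> GZ Gphi P_clifford; apply: phi_invariant_span => X.
case/allpairsPdep=> t [s [t_nonid sP ->]].
move: sP; rewrite mem_filter => /andP[Pst s_nonid].
have [a [s' [a_neq0 s'_nonid sE]]] := adj_act_sigma s_nonid.
have [b [t' [b_neq0 t'_nonid tE]]] := adj_act_sigma t_nonid.
rewrite Gphi sE tE GZ memvZ // memv_span //.
apply/allpairsPdep; exists t', s'; split=> //.
by rewrite mem_filter s'_nonid (P_clifford s t s' t' a b).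
Qed.

End CliffordAction.

Theorem lemma3 (q : nat) (hq : (0 < q)%N) (C : 'M[algC]_(2 ^ q)) (hC : clifford C) :
  phi_invariant C (Vid q) /\ phi_invariant C (Vr q) /\ phi_invariant C (Vl q) /\
  phi_invariant C (Vd q) /\ phi_invariant C (VSc q) /\ phi_invariant C (VSa q) /\
  phi_invariant C (VAc q) /\ phi_invariant C (VAa q).
Proof.
have sigma0E := adj_act_sigma0 hC.
split.
  apply: phi_invariant_span => _ /[!inE] /eqP ->.
  by rewrite phi2_tens sigma0E memv_span ?inE.
split.
  apply: (map_sigma_invariant hC (F := fun A => sigma0 q *t A)) => [a A|A].
    by rewrite tensmxZr memvZ ?memv_line.
  by rewrite phi2_tens sigma0E.
split.
  apply: (map_sigma_invariant hC (F := fun A => A *t sigma0 q)) => [a A|A].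
    by rewrite tensmxZl memvZ ?memv_line.
  by rewrite phi2_tens sigma0E.
split.
  apply: (map_sigma_invariant hC (F := fun A => A *t A)) => [a A|A].
    by rewrite tensmxZ memvZ ?memv_line.
  exact: phi2_tens.
have comm_stable := commutes_ne_clifford_stable hC.
have anti_stable := anticommutes_clifford_stable hC.
split; first exact: (pair_sigma_invariant hC (@SmxZ q) (@phi2_Smx q C) comm_stable).
split; first exact: (pair_sigma_invariant hC (@SmxZ q) (@phi2_Smx q C) anti_stable).
split; first exact: (pair_sigma_invariant hC (@AmxZ q) (@phi2_Amx q C) comm_stable).
exact: (pair_sigma_invariant hC (@AmxZ q) (@phi2_Amx q C) anti_stable).
Qed.
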